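(* Let $A$ be a predicate and $(\rho_i)_i$ a family of mixed memories with $\rho_i\models A$ for all $i$ such that $\sum_i\rho_i$ exists. Then $\sum_i\rho_i\models A$.
   Context: Variables are program variables, entangled ghosts or unentangled ghosts. $\ell^2[V]$ is the Hilbert space with orthonormal basis indexed by assignments on $V$; mixed memories over $V$ are positive trace-class operators on $\ell^2[V]$; $\mathrm{tr}_W$ is partial trace; $\mathrm{supp}\,\rho$ is the closure of the range of $\rho$. A mixed memory over $V\cup W$ is $(V,W)$-separable if it is a convergent sum $\sum_i\rho_i\otimes\rho_i'$ of mixed memories over $V$ and $W$. A predicate over $V$ is a closed subspace of $\ell^2[V]$. For program variables $X$, entangled ghosts $E$, unentangled ghosts $U$ and a predicate $A$ over $X\cup E\cup U$, a mixed memory $\rho$ over $X$ satisfies $A$ ($\rho\models A$) iff there exists an $(X\cup E,U)$-separable mixed memory $\rho^\circ$ over $X\cup E\cup U$ with $\mathrm{supp}\,\rho^\circ\subseteq A$ and $\mathrm{tr}_{E\cup U}\rho^\circ=\rho$. *)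

(* R : realType (mathcomp-analysis reals), C := R[i]
   (complex numbers from mathcomp-real-closed).  Operators on l2[T] are
   represented by their matrices (kernels) w.r.t. the canonical basis. *)
From mathcomp Require Import all_boot all_order all_algebra.
From mathcomp Require Import reals.
From mathcomp.real_closed Require Import complex.
From Stdlib Require List.
Set Implicit Arguments.
Unset Strict Implicit.
Unset Printing Implicit Defensive.
Import Order.TTheory GRing.Theory Num.Theory.
Local Open Scope ring_scope.

Section Defs.
Variable R : realType.
Local Notation C := R[i].

(* Unconditional convergence of a family of complex numbers indexed by an
   arbitrary type: the net of finite partial sums converges to s. Finite
   subsets are duplicate-free lists. *)
Definition hasSum (I : Type) (f : I -> C) (s : C) : Prop :=
  forall e : C, 0 < e -> exists F0 : seq I,
    forall F : seq I, List.NoDup F -> (forall i, List.In i F0 -> List.In i F) ->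
      `|\sum_(i <- F) f i - s| < e.

Definition summable (I : Type) (f : I -> C) : Prop := exists s, hasSum f s.

Definition is_l2 (T : Type) (f : T -> C) : Prop :=
  summable (fun x => `|f x| ^+ 2).

Definition l2dist_lt (T : Type) (f g : T -> C) (e : C) : Prop :=
  exists s, hasSum (fun x => `|f x - g x| ^+ 2) s /\ s < e ^+ 2.

Definition in_closure (T : Type) (S : (T -> C) -> Prop) (f : T -> C) : Prop :=
  is_l2 f /\ forall e : C, 0 < e -> exists g, S g /\ l2dist_lt f g e.

Record predicate (T : Type) := Predicate {
  pred_mem :> (T -> C) -> Prop;
  pred_l2 : forall f, pred_mem f -> is_l2 f;
  pred_0 : pred_mem (fun _ => 0);
  pred_add : forall f g, pred_mem f -> pred_mem g -> pred_mem (fun x => f x + g x);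
  pred_scale : forall (a : C) f, pred_mem f -> pred_mem (fun x => a * f x);
  pred_closed : forall f, in_closure pred_mem f -> pred_mem f
}.

(* operators (matrices w.r.t. the canonical basis of l2[T]) *)
Definition kernel (T : Type) := T -> T -> C.

(* mixed memory = positive trace-class operator: positive semidefinite
   matrix with summable diagonal (finite trace). *)
Definition mixed (T : Type) (rho : kernel T) : Prop :=
  (forall (F : seq T) (c : T -> C),
      0 <= \sum_(x <- F) \sum_(y <- F) (c x)^* * rho x y * c y)
  /\ summable (fun x => rho x x).

Definition applies (T : Type) (rho : kernel T) (psi phi : T -> C) : Prop :=
  forall x, hasSum (fun y => rho x y * psi y) (phi x).

Definition range (T : Type) (rho : kernel T) : (T -> C) -> Prop :=
  fun phi => exists psi, is_l2 psi /\ applies rho psi phi.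

Definition supp_sub (T : Type) (rho : kernel T) (A : (T -> C) -> Prop) : Prop :=
  forall phi, in_closure (range rho) phi -> A phi.

Definition is_sum (I T : Type) (rhos : I -> kernel T) (sigma : kernel T) : Prop :=
  mixed sigma /\ forall x y, hasSum (fun i => rhos i x y) (sigma x y).

Definition tensor (T W : Type) (rho : kernel T) (rho' : kernel W) : kernel (T * W) :=
  fun p q => rho p.1 q.1 * rho' p.2 q.2.

(* (V,W)-separable mixed memory over V cup W (assignments = pairs) *)
Definition separable (V W : Type) (rho : kernel (V * W)) : Prop :=
  exists (I : Type) (r : I -> kernel V) (r' : I -> kernel W),
    (forall i, mixed (r i) /\ mixed (r' i)) /\
    is_sum (fun i => tensor (r i) (r' i)) rho.

(* satisfaction: rho over X satisfies A over X cup E cup U, assignments on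
   X cup E cup U being (X * E) * U *)
Definition sat (X E U : Type) (rho : kernel X) (A : predicate ((X * E) * U)) : Prop :=
  exists rho0 : kernel ((X * E) * U),
    mixed rho0 /\ separable rho0 /\ supp_sub rho0 A /\
    forall x x', hasSum (fun w : E * U => rho0 ((x, w.1), w.2) ((x', w.1), w.2))
                        (rho x x').

End Defs.

(* Pick for every i a witness rho0_i of rho_i |= A.  Its partial trace is rho_i,
   so the diagonal of rho0_i is dominated by that of rho_i; since a positive
   kernel satisfies |rho(p,q)| <= (rho(p,p) + rho(q,q)) / 2, the family (rho0_i)
   is summable entrywise, and Fubini for unconditional sums shows that the sum
   rho0 is a mixed memory with partial trace sum_i rho_i = sigma.  rho0 is
   separable: concatenate the tensor decompositions of the rho0_i.  Its support
   lies in A: if phi = rho0 psi, then the finite sums of the vectors rho0_i psi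
   lie in A and approximate phi, because ||T psi|| <= tr(T) ||psi|| for positive
   T and the trace of the tail sum_(i not in F) rho0_i becomes small; A is closed. *)

From mathcomp Require Import all_boot all_order all_algebra.
From mathcomp Require Import reals.
From mathcomp.real_closed Require Import complex.
From mathcomp Require Import boolp ring lra.
From mathcomp Require classical_sets.
From Stdlib Require List Eqdep.
Set Implicit Arguments.
Unset Strict Implicit.
Unset Printing Implicit Defensive.
Import Order.TTheory GRing.Theory Num.Theory.
Local Open Scope ring_scope.

Definition lunion (T : Type) (F1 F2 : seq T) : seq T :=
  List.nodup (fun x y => pselect (x = y)) (F1 ++ F2).

Lemma lunion_NoDup (T : Type) (F1 F2 : seq T) : List.NoDup (lunion F1 F2).
Proof. exact: List.NoDup_nodup. Qed.

Lemma in_lunion (T : Type) (F1 F2 : seq T) x :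
  List.In x (lunion F1 F2) <-> List.In x F1 \/ List.In x F2.
Proof. by rewrite /lunion List.nodup_In; exact: List.in_app_iff. Qed.

Lemma incl_lunionl (T : Type) (F1 F2 : seq T) : List.incl F1 (lunion F1 F2).
Proof. by move=> x Hx; apply/in_lunion; left. Qed.

Lemma incl_lunionr (T : Type) (F1 F2 : seq T) : List.incl F2 (lunion F1 F2).
Proof. by move=> x Hx; apply/in_lunion; right. Qed.

Lemma eq_big_In (T : Type) (V : nmodType) (F : seq T) (f g : T -> V) :
  (forall i, List.In i F -> f i = g i) -> \sum_(i <- F) f i = \sum_(i <- F) g i.
Proof.
elim: F => [|a F IH] fg; first by rewrite !big_nil.
rewrite !big_cons fg /=; last by left.
by rewrite IH // => i Fi; apply: fg; right.
Qed.

Section ListSums.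
Variables (T : Type) (V : numDomainType).
Implicit Types (F : seq T) (f g : T -> V).

Lemma ler_sum_In F f g :
  (forall i, List.In i F -> f i <= g i) -> \sum_(i <- F) f i <= \sum_(i <- F) g i.
Proof.
elim: F => [|a F IH] fg; first by rewrite !big_nil.
rewrite !big_cons lerD //; first by apply: fg; left.
by apply: IH => i Fi; apply: fg; right.
Qed.

Lemma sumr_ge0_In F f :
  (forall i, List.In i F -> 0 <= f i) -> 0 <= \sum_(i <- F) f i.
Proof. by move=> /(ler_sum_In (f := fun=> 0)); rewrite big1. Qed.

Lemma ler_sum_incl F0 F f :
  (forall i, List.In i F -> 0 <= f i) -> List.NoDup F0 -> List.NoDup F ->
  List.incl F0 F -> \sum_(i <- F0) f i <= \sum_(i <- F) f i.
Proof.
elim: F0 F => [|a F0 IH] F f0 N0 N sub; first by rewrite big_nil sumr_ge0_In.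
have [F1 [F2 defF]] := List.in_split a F (sub a (or_introl erefl)); subst F.
move/List.NoDup_cons_iff: N0 => [aF0 N0].
have sub' : List.incl F0 (F1 ++ F2).
  move=> x xF0; have := sub x (or_intror xF0).
  rewrite !List.in_app_iff /= => -[|[ax|]]; auto.
  by subst x.
have f0' i : List.In i (F1 ++ F2) -> 0 <= f i.
  by rewrite List.in_app_iff => Hi; apply: f0; rewrite List.in_app_iff /=; tauto.
have := IH _ f0' N0 (List.NoDup_remove_1 _ _ _ N) sub'.
by rewrite big_cons !big_cat big_cons /= addrCA lerD2l.
Qed.

End ListSums.

Lemma big_flat_map (T T' : Type) (V : nmodType) (f : T' -> V) (G : T -> seq T') F :
  \sum_(i <- List.flat_map G F) f i = \sum_(j <- F) \sum_(i <- G j) f i.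
Proof. by elim: F => [|a F IH] /=; rewrite ?big_nil // big_cat big_cons IH. Qed.

Lemma NoDup_flat_map (K I : Type) (pi : K -> I) (G : I -> seq K) (F : seq I) :
  (forall i k, List.In k (G i) -> pi k = i) -> (forall i, List.NoDup (G i)) ->
  List.NoDup F -> List.NoDup (List.flat_map G F).
Proof.
move=> Gpi NG; elim: F => [|i F IH] /=; first by constructor.
move=> /List.NoDup_cons_iff[iF NF].
apply: List.NoDup_app => [|| k /Gpi ki]; [exact: NG | exact: IH |].
by move=> /List.in_flat_map[j [jF /Gpi kj]]; apply: iF; rewrite -ki kj.
Qed.

Lemma sum_pred1_In (I : Type) (V : nmodType) (a : I) (P : seq I) (x : V) :
  List.NoDup P -> List.In a P -> \sum_(i <- P | `[< a = i >]) x = x.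
Proof.
have none Q : ~ List.In a Q -> \sum_(i <- Q | `[< a = i >]) x = 0.
  elim: Q => [|c Q IH] aQ; first by rewrite big_nil.
  rewrite big_cons; case: asboolP => [ac | _]; first by case: aQ; left.
  by apply: IH => aQ'; apply: aQ; right.
elim: P => [|b P IH] //= /List.NoDup_cons_iff[bP NP] aP; rewrite big_cons.
case: asboolP => [ab | nab]; first by subst b; rewrite none ?addr0.
by case: aP => [ba | ?]; [case: nab | apply: IH].
Qed.

Lemma sum_group_fibers (K I : Type) (V : nmodType) (pi : K -> I) (g : K -> V)
    F (P : seq I) :
  List.NoDup P -> (forall k, List.In k F -> List.In (pi k) P) ->
  \sum_(k <- F) g k = \sum_(i <- P) \sum_(k <- F | `[< pi k = i >]) g k.
Proof.
move=> NP FP; under [RHS]eq_bigr do rewrite big_mkcond; rewrite exchange_big /=.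
by apply: eq_big_In => k Fk; rewrite -big_mkcond sum_pred1_In //; apply: FP.
Qed.

Lemma AGM2_le (F : numFieldType) (n a b : F) :
  0 <= n -> 0 <= a -> 0 <= b -> n ^+ 2 <= a * b -> n <= (a + b) / 2.
Proof.
move=> n0 a0 b0 nab; rewrite -(ler_pXn2r (ltn0Sn 1)) ?nnegrE ?divr_ge0 ?addr_ge0 //.
apply: le_trans nab (real_leif_AGM2 (ger0_real a0) (ger0_real b0)).
Qed.

Lemma sqr_mul_lt_of_le_div (F : numFieldType) (n e d : F) :
  0 <= n -> 0 < e -> 0 <= d -> d <= e / (n + 1) -> d ^+ 2 * n < e ^+ 2.
Proof.
move=> n0 e0 d0 de; have n1 : 0 < n + 1 by rewrite ltr_wpDl.
apply: le_lt_trans (_ : _ <= (e / (n + 1)) ^+ 2 * n) _.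
  by rewrite ler_wpM2r // ler_pXn2r ?nnegrE // (le_trans d0).
rewrite expr_div_n mulrAC ltr_pdivrMr ?exprn_gt0 // ltr_pM2l ?exprn_gt0 //.
by rewrite (@lt_le_trans _ _ (n + 1)) ?ltrDl // expr2 ler_peMr ?(ltW n1) // lerDr.
Qed.

Lemma CauchySchwarz_sum (T : Type) (F : realFieldType) (s : seq T) (x y : T -> F) :
  (\sum_(i <- s) x i * y i) ^+ 2 <= (\sum_(i <- s) x i ^+ 2) * (\sum_(i <- s) y i ^+ 2).
Proof.
set A := \sum_(i <- s) x i ^+ 2; set B := \sum_(i <- s) x i * y i.
set D := \sum_(i <- s) y i ^+ 2.
have quad a b : 0 <= a ^+ 2 * A + 2 * a * b * B + b ^+ 2 * D.
  have -> : a ^+ 2 * A + 2 * a * b * B + b ^+ 2 * D =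
      \sum_(i <- s) (a * x i + b * y i) ^+ 2.
    by rewrite /A /B /D !mulr_sumr -!big_split /=; apply: eq_bigr => i _; ring.
  by rewrite sumr_ge0 // => i _; apply: sqr_ge0.
have := quad D (- B); have := quad B (- A); have := quad 1 (-1); have := quad 1 1.
have := quad 1 0; have := quad 0 1; rewrite !(expr1n, expr0n, mul0r, mulr0) /=.
move=> D0 A0 h4 h3 h2 h1.
have [Dp | Dz] : 0 < D \/ D = 0 by lra.
  have : 0 <= D * (A * D - B ^+ 2) by nra.
  by rewrite pmulr_rge0 // subr_ge0 mulrC.
have [Ap | Az] : 0 < A \/ A = 0 by lra.
  have : 0 <= A * (A * D - B ^+ 2) by nra.
  by rewrite pmulr_rge0 // subr_ge0 mulrC.
by rewrite Dz Az in h3 h4 *; rewrite (_ : B = 0) ?expr0n ?mulr0 //; lra.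
Qed.

Section Summation.
Variable R : realType.
Local Notation C := R[i].

Definition hasSum_on (T : Type) (P : T -> Prop) (f : T -> C) (s : C) : Prop :=
  forall e : C, 0 < e -> exists2 F0 : seq T, List.Forall P F0 &
    forall F : seq T, List.NoDup F -> List.Forall P F -> List.incl F0 F ->
      `|\sum_(i <- F) f i - s| < e.

Lemma hasSum_onT (T : Type) (f : T -> C) s :
  hasSum f s <-> hasSum_on (fun _ => True) f s.
Proof.
split=> fs e e0.
  have [F0 HF0] := fs e e0; exists F0 => [|F NF _]; last exact: HF0.
  by apply/List.Forall_forall.
have [F0 _ HF0] := fs e e0.
by exists F0 => F NF; apply: HF0 => //; apply/List.Forall_forall.
Qed.

Lemma Forall_lunion (T : Type) (P : T -> Prop) F1 F2 :
  List.Forall P F1 -> List.Forall P F2 -> List.Forall P (lunion F1 F2).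
Proof.
rewrite !List.Forall_forall => P1 P2 x /in_lunion[]; [exact: P1 | exact: P2].
Qed.

Lemma halfr_gt0 (e : C) : 0 < e -> 0 < e / 2%:R.
Proof. by move=> e0; rewrite divr_gt0 // ltr0n. Qed.

Lemma eq0_small (z : C) : (forall e : C, 0 < e -> `|z| < e) -> z = 0.
Proof.
move=> small; apply/eqP; apply: contraT => z0.
by have := small `|z|; rewrite normr_gt0 z0 ltxx => /(_ isT).
Qed.

Lemma ge0_Re_real (z : C) : 0 <= z -> z = (complex.Re z)%:C%C.
Proof. by case: z => a b; rewrite lecE /= => /andP[/eqP -> _]. Qed.

Lemma ge0_approx (x : C) :
  (forall e : C, 0 < e -> exists2 y, 0 <= y & `|y - x| < e) -> 0 <= x.
Proof.
move=> approx; suff <- : `|x| = x by [].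
apply/eqP; rewrite -subr_eq0; apply/eqP; apply: eq0_small => e e0.
have [y y0 yx] := approx _ (halfr_gt0 e0).
have -> : `|x| - x = (`|x| - `|y|) + (y - x) by rewrite (ger0_norm y0) addrA subrK.
apply: le_lt_trans (ler_normD _ _) _; rewrite [e]splitr ler_ltD //.
by apply: le_trans (ler_dist_dist _ _) _; rewrite distrC ltW.
Qed.

Section Algebra.
Variables (T : Type) (P : T -> Prop).
Implicit Types (f g : T -> C) (s t : C).

Lemma hasSum_on_unique f s t : hasSum_on P f s -> hasSum_on P f t -> s = t.
Proof.
move=> fs ft; apply/eqP; rewrite -subr_eq0; apply/eqP; apply: eq0_small => e e0.
have [F1 P1 H1] := fs _ (halfr_gt0 e0); have [F2 P2 H2] := ft _ (halfr_gt0 e0).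
have N := lunion_NoDup F1 F2; have PF := Forall_lunion P1 P2.
have := H1 _ N PF (@incl_lunionl _ _ _); have := H2 _ N PF (@incl_lunionr _ _ _).
move=> ft' fs'; rewrite distrC in fs'; rewrite [e]splitr.
exact: le_lt_trans (ler_distD _ _ _) (ltrD fs' ft').
Qed.

Lemma eq_hasSum_on f g s :
  (forall i, P i -> f i = g i) -> hasSum_on P f s -> hasSum_on P g s.
Proof.
move=> fg fs e /fs[F0 P0 H0]; exists F0 => // F N PF sub.
rewrite -(eq_big_In (f := f)); first exact: H0.
by move=> i Fi; apply: fg; exact: (List.Forall_forall _ _).1 PF i Fi.
Qed.

Lemma hasSum_onD f g s t :
  hasSum_on P f s -> hasSum_on P g t -> hasSum_on P (fun i => f i + g i) (s + t).
Proof.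
move=> fs gt e e0.
have [F1 P1 H1] := fs _ (halfr_gt0 e0); have [F2 P2 H2] := gt _ (halfr_gt0 e0).
exists (lunion F1 F2); first exact: Forall_lunion.
move=> F N PF sub; rewrite big_split /= opprD addrACA [e]splitr.
apply: le_lt_trans (ler_normD _ _) (ltrD _ _).
  exact: H1 N PF (List.incl_tran (@incl_lunionl _ _ _) sub).
exact: H2 N PF (List.incl_tran (@incl_lunionr _ _ _) sub).
Qed.

Lemma hasSum_onZ (c : C) f s :
  hasSum_on P f s -> hasSum_on P (fun i => c * f i) (c * s).
Proof.
move=> fs e e0; have c1 : 0 < `|c| + 1 by rewrite ltr_wpDl.
have [F0 P0 H0] := fs _ (divr_gt0 e0 c1); exists F0 => // F N PF sub.
rewrite -mulr_sumr -mulrBr normrM.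
apply: le_lt_trans (_ : _ <= (`|c| + 1) * `|\sum_(i <- F) f i - s|) _.
  by rewrite ler_wpM2r // lerDl.
by rewrite mulrC -ltr_pdivlMr // H0.
Qed.

Lemma hasSum_on0 : hasSum_on P (fun _ => 0) 0.
Proof. by move=> e e0; exists [::] => // F _ _ _; rewrite big1 // subr0 normr0. Qed.

Lemma hasSum_onB f g s t :
  hasSum_on P f s -> hasSum_on P g t -> hasSum_on P (fun i => f i - g i) (s - t).
Proof.
move=> fs /(hasSum_onZ (-1)) gt; rewrite -mulN1r.
by apply: eq_hasSum_on (hasSum_onD fs gt) => i _; rewrite mulN1r.
Qed.

Lemma hasSum_on_sum (J : Type) (L : seq J) (f : J -> T -> C) (s : J -> C) :
  (forall j, hasSum_on P (f j) (s j)) ->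
  hasSum_on P (fun i => \sum_(j <- L) f j i) (\sum_(j <- L) s j).
Proof.
move=> fs; elim: L => [|j L IH]; first by rewrite big_nil;
  apply: eq_hasSum_on hasSum_on0 => i _; rewrite big_nil.
by rewrite big_cons; apply: eq_hasSum_on (hasSum_onD (fs j) IH) => i _; rewrite big_cons.
Qed.

Lemma ler_sum_hasSum_on f s F :
  (forall i, P i -> 0 <= f i) -> hasSum_on P f s -> List.NoDup F -> List.Forall P F ->
  \sum_(i <- F) f i <= s.
Proof.
move=> f0 fs N PF; rewrite -subr_ge0; apply: ge0_approx => e /fs[F0 P0 H0].
have PU := Forall_lunion P0 PF; have NU := lunion_NoDup F0 F.
exists (\sum_(i <- lunion F0 F) f i - \sum_(i <- F) f i).
  rewrite subr_ge0; apply: ler_sum_incl N NU (@incl_lunionr _ _ _) => i Ui.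
  by apply: f0; exact: (List.Forall_forall _ _).1 PU i Ui.
by rewrite opprB addrA subrK; apply: H0 (@incl_lunionl _ _ _).
Qed.

Lemma hasSum_on_ge0 f s : (forall i, P i -> 0 <= f i) -> hasSum_on P f s -> 0 <= s.
Proof.
move=> f0 fs; have := ler_sum_hasSum_on f0 fs (List.NoDup_nil _) (List.Forall_nil _).
by rewrite big_nil.
Qed.

Lemma hasSum_on_ub f s (b : C) :
  (forall F, List.NoDup F -> List.Forall P F -> \sum_(i <- F) f i <= b) ->
  hasSum_on P f s -> s <= b.
Proof.
move=> fb fs; rewrite -subr_ge0; apply: ge0_approx => e /fs[F0 P0 H0].
exists (b - \sum_(i <- lunion F0 [::]) f i).
  rewrite subr_ge0; apply: fb; first exact: lunion_NoDup.
  exact: Forall_lunion.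
rewrite opprB addrC addrA subrK distrC.
exact: H0 (lunion_NoDup _ _) (Forall_lunion _ _) (@incl_lunionl _ _ _).
Qed.

Lemma summable_on_ge0_bounded f (b : C) :
  (forall i, P i -> 0 <= f i) ->
  (forall F, List.NoDup F -> List.Forall P F -> \sum_(i <- F) f i <= b) ->
  exists s, hasSum_on P f s.
Proof.
move=> f0 fb; pose u i := complex.Re (f i).
have fu i : P i -> f i = (u i)%:C%C by move/f0/ge0_Re_real.
pose E (x : R) : Prop := exists2 F, List.NoDup F /\ List.Forall P F &
                                        x = \sum_(i <- F) u i.
have uF F : List.Forall P F -> (\sum_(i <- F) u i)%:C%C = \sum_(i <- F) f i.
  move=> PF; rewrite rmorph_sum; apply: eq_big_In => i Fi.
  by rewrite fu //; exact: (List.Forall_forall _ _).1 PF i Fi.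
have supE : classical_sets.has_sup E.
  split; first by exists 0, [::]; [split; constructor | rewrite big_nil].
  exists (complex.Re b) => _ [F [N PF] ->].
  by have := fb F N PF; rewrite -uF // lecE => /andP[].
exists (sup E)%:C%C => e e0; have ee := ge0_Re_real (ltW e0).
have e0' : 0 < complex.Re e by rewrite -ltcR -ee.
have [_ [F0 [N0 P0] ->] lt0] := sup_adherent e0' supE; rewrite ee.
exists F0 => // F N PF sub; rewrite -uF // -rmorphB normc_def /= expr0n addr0.
have le0 : \sum_(i <- F0) u i <= \sum_(i <- F) u i.
  apply: ler_sum_incl N0 N sub => i Fi.
  have Pi : P i by exact: (List.Forall_forall _ _).1 PF i Fi.
  by rewrite -lecR -fu ?f0.
have le1 : \sum_(i <- F) u i <= sup E by apply: sup_upper_bound => //; exists F.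
by rewrite sqrtr_sqr ltcR ler0_norm ?subr_le0 // opprB; lra.
Qed.

Lemma summable_on_norm_bounded f (b : C) :
  (forall F, List.NoDup F -> List.Forall P F -> \sum_(i <- F) `|f i| <= b) ->
  exists s, hasSum_on P f s.
Proof.
move=> fb.
have partsP (part : C -> C) : (forall z, part z \is Num.real /\ `|part z| <= `|z|) ->
    exists s, hasSum_on P (fun i => `|f i| + part (f i)) s.
  move=> partE; apply: (@summable_on_ge0_bounded _ (b + b)) => [i _ | F N PF].
    have [pr] := partE (f i); rewrite real_ler_norml // => /andP[+ _].
    by rewrite -subr_ge0 opprK addrC.
  rewrite big_split lerD ?fb //=; apply: le_trans (fb F N PF).
  apply: ler_sum_In => i _; have [pr le] := partE (f i).
  exact: le_trans (real_ler_norm pr) le.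
have [s1 H1] := partsP _ (fun z => conj (Creal_Re z) (leif_normC_Re_Creal z).1).
have normIm (z : C) : `|'Im z| <= `|z|.
  by rewrite -normrN -ReMil -[`|z|]mul1r -normCi -normrM (leif_normC_Re_Creal _).1.
have [s2 H2] := partsP _ (fun z => conj (Creal_Im z) (normIm z)).
have [s0 H0] : exists s, hasSum_on P (fun i => `|f i|) s.
  by apply: summable_on_ge0_bounded fb => i _.
exists ((s1 - s0) + 'i * (s2 - s0)).
apply: eq_hasSum_on (hasSum_onD (hasSum_onB H1 H0) (hasSum_onZ 'i (hasSum_onB H2 H0))).
by move=> i _; rewrite [f i in RHS]Crect; congr (_ + 'i * _); rewrite addrC addKr.
Qed.

End Algebra.

Section Unrestricted.
Variable T : Type.
Implicit Types (f g : T -> C) (s t : C).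

Lemma hasSum_unique f s t : hasSum f s -> hasSum f t -> s = t.
Proof. by move=> /hasSum_onT fs /hasSum_onT; apply: hasSum_on_unique. Qed.

Lemma hasSumD f g s t :
  hasSum f s -> hasSum g t -> hasSum (fun i => f i + g i) (s + t).
Proof. by move=> /hasSum_onT fs /hasSum_onT gt; apply/hasSum_onT/hasSum_onD. Qed.

Lemma hasSumB f g s t :
  hasSum f s -> hasSum g t -> hasSum (fun i => f i - g i) (s - t).
Proof. by move=> /hasSum_onT fs /hasSum_onT gt; apply/hasSum_onT/hasSum_onB. Qed.

Lemma hasSumZ (c : C) f s : hasSum f s -> hasSum (fun i => c * f i) (c * s).
Proof. by move=> /hasSum_onT fs; apply/hasSum_onT/hasSum_onZ. Qed.

Lemma hasSum_sum (J : Type) (L : seq J) (f : J -> T -> C) (s : J -> C) :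
  (forall j, hasSum (f j) (s j)) ->
  hasSum (fun i => \sum_(j <- L) f j i) (\sum_(j <- L) s j).
Proof. by move=> fs; apply/hasSum_onT/hasSum_on_sum => j; apply/hasSum_onT. Qed.

Lemma ler_sum_hasSum f s F :
  (forall i, 0 <= f i) -> hasSum f s -> List.NoDup F -> \sum_(i <- F) f i <= s.
Proof.
move=> f0 /hasSum_onT fs N; apply: ler_sum_hasSum_on fs N _ => [i _ //|].
exact/List.Forall_forall.
Qed.

Lemma hasSum_ge0 f s : (forall i, 0 <= f i) -> hasSum f s -> 0 <= s.
Proof. by move=> f0 /hasSum_onT; apply: hasSum_on_ge0 => i _. Qed.

End Unrestricted.

Lemma hasSum_on_inj (J K : Type) (phi : J -> K) (P : K -> Prop) (g : K -> C) s :
  injective phi -> (forall k, P k <-> exists j, phi j = k) ->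
  hasSum (fun j => g (phi j)) s -> hasSum_on P g s.
Proof.
move=> inj img gs e /gs[F0 H0]; exists (List.map phi F0).
  by apply/List.Forall_forall => k /List.in_map_iff[j [<- _]]; apply/img; exists j.
move=> F N PF sub.
have [F' defF] : exists F', List.map phi F' = F.
  elim: F PF {N sub} => [|k F IH]; first by exists [::].
  by case/List.Forall_cons_iff => /img[j <-] /IH[F' <-]; exists (j :: F').
subst F.
rewrite big_map; apply: H0 => [|j F0j]; first exact: List.NoDup_map_inv N.
have /List.in_map_iff[j' [/inj <- //]] := sub _ (List.in_map phi _ _ F0j).
Qed.

Lemma hasSum_pair_fiber (I W : Type) (g : I * W -> C) i s :
  hasSum (fun w => g (i, w)) s -> hasSum_on (fun k => k.1 = i) g s.
Proof.
apply: hasSum_on_inj => [w w' [] // | [i' w] /=].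
by split=> [-> | [w' [-> _]]]; [exists w | ].
Qed.

Lemma hasSum_swap (I W : Type) (g : I * W -> C) s :
  hasSum g s -> hasSum (fun k : W * I => g (k.2, k.1)) s.
Proof.
move=> gs; apply/hasSum_onT; apply: (@hasSum_on_inj _ _ (fun k => (k.2, k.1))).
- by move=> [i w] [i' w'] [-> ->].
- by move=> [w i]; split=> // _; exists (i, w).
- by rewrite (_ : (fun k => _) = g) // funeqE => -[].
Qed.

Section Fubini.
Variables (K I : Type) (pi : K -> I) (g : K -> C) (h : I -> C).
Hypothesis fibers : forall i, hasSum_on (fun k => pi k = i) g (h i).

Lemma hasSum_fibers s : hasSum g s -> hasSum h s.
Proof.
move=> /hasSum_onT gs e e0; have [F0 _ H0] := gs _ (halfr_gt0 e0).
exists (List.map pi F0) => F N sub.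
pose d := e / 2%:R / (size F).+1%:R.
have d0 : 0 < d by rewrite divr_gt0 ?halfr_gt0 ?ltr0n.
have near_h i : exists G0, List.Forall (fun k => pi k = i) G0 /\
    forall G, List.NoDup G -> List.Forall (fun k => pi k = i) G -> List.incl G0 G ->
      `|\sum_(k <- G) g k - h i| < d.
  by have [G ? ?] := fibers i d0; exists G.
have [G0 HG0] := choice near_h.
pose G i := lunion (G0 i) [seq k <- F0 | `[< pi k = i >]].
have Gpi i k : List.In k (G i) -> pi k = i.
  case/in_lunion => [G0k | /List.filter_In[_ /asboolP //]].
  exact: (List.Forall_forall _ _).1 (HG0 i).1 k G0k.
have HG i : `|\sum_(k <- G i) g k - h i| < d.
  apply: (HG0 i).2; [exact: lunion_NoDup | | exact: incl_lunionl].
  by apply/List.Forall_forall => k /Gpi.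
pose L := List.flat_map G F.
have NL : List.NoDup L by apply: NoDup_flat_map Gpi _ N => i; exact: lunion_NoDup.
have sub0 : List.incl F0 L.
  move=> k F0k; apply/List.in_flat_map; exists (pi k); split.
    by apply: sub; apply: List.in_map.
  by apply: incl_lunionr; apply/List.filter_In; split=> //; apply/asboolP.
have := H0 L NL ((List.Forall_forall _ _).2 (fun _ _ => Logic.I)) sub0.
have -> : \sum_(i <- F) h i - s =
    \sum_(i <- F) (h i - \sum_(k <- G i) g k) + (\sum_(k <- L) g k - s).
  by rewrite big_flat_map sumrB addrA subrK.
move=> gL; rewrite [e]splitr; apply: le_lt_trans (ler_normD _ _) (ler_ltD _ gL).
apply: le_trans (ler_norm_sum _ _ _) _.
apply: le_trans (_ : _ <= \sum_(i <- F) d) _.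
  by apply: ler_sum_In => i _; rewrite distrC ltW.
rewrite big_const_seq count_predT iter_addr addr0 -[_ *+ size F]mulr_natr /d.
rewrite -mulrA ler_piMr ?ltW ?halfr_gt0 //.
by rewrite mulrC ltr_pdivrMr ?ltr0n // mul1r ltr_nat.
Qed.

Hypothesis g_ge0 : forall k, 0 <= g k.

Lemma ler_sum_fibers t F : hasSum h t -> List.NoDup F -> \sum_(k <- F) g k <= t.
Proof.
move=> /hasSum_onT ht N; pose P := lunion (List.map pi F) [::].
have NP : List.NoDup P := lunion_NoDup _ _.
rewrite (@sum_group_fibers _ _ _ pi g F P NP); last first.
  by move=> k Fk; apply/incl_lunionl/List.in_map.
apply: le_trans (ler_sum_hasSum_on _ ht NP _); last 2 first.
- by move=> i _; apply: hasSum_on_ge0 (fibers i) => k _.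
- exact/List.Forall_forall.
apply: ler_sum_In => i _; rewrite -big_filter.
apply: ler_sum_hasSum_on (fibers i) (List.NoDup_filter _ N) _ => [k _ //|].
by apply/List.Forall_forall => k /List.filter_In[_ /asboolP].
Qed.

Lemma hasSum_fibers_ge0 t : hasSum h t -> hasSum g t.
Proof.
move=> ht; have [s gs] : exists s, hasSum_on (fun _ => True) g s.
  by apply: (summable_on_ge0_bounded (b := t)) => // F N _; apply: ler_sum_fibers.
have /hasSum_onT hs : hasSum h s by apply/hasSum_fibers/hasSum_onT.
by move/hasSum_onT: ht => /(hasSum_on_unique hs) <-; apply/hasSum_onT.
Qed.

End Fubini.

Lemma summable_dominated (T : Type) (f g : T -> C) t :
  (forall k, `|f k| <= g k) -> hasSum g t -> exists s, hasSum f s.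
Proof.
move=> fg /hasSum_onT gt.
have [s fs] : exists s, hasSum_on (fun _ => True) f s.
  apply: (summable_on_norm_bounded (b := t)) => F N PF.
  apply: le_trans (ler_sum_In (fun i _ => fg i)) (ler_sum_hasSum_on _ gt N PF).
  by move=> k _; apply: le_trans (fg k).
by exists s; apply/hasSum_onT.
Qed.

Section PSD.

Definition psd (T : Type) (rho : kernel R T) : Prop :=
  forall (F : seq T) (c : T -> C),
    0 <= \sum_(x <- F) \sum_(y <- F) (c x)^* * rho x y * c y.

Variables (T : Type) (rho : kernel R T).
Hypothesis rho_psd : psd rho.

Lemma psd_diag_ge0 p : 0 <= rho p p.
Proof.
have := rho_psd [:: p] (fun _ => 1).
by rewrite !big_cons !big_nil !addr0 conjC1 mul1r mulr1.
Qed.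

Lemma psd_pair p q (a b : C) : p <> q ->
  0 <= a^* * rho p p * a + a^* * rho p q * b + (b^* * rho q p * a + b^* * rho q q * b).
Proof.
move=> pq; have := rho_psd [:: p; q] (fun z => if `[< z = p >] then a else b).
rewrite !big_cons !big_nil !addr0 !addrA.
by case: asboolP => // _; case: asboolP => // qp; case: pq.
Qed.

Lemma psd_normX_le p q : `|rho p q| ^+ 2 <= rho p p * rho q q.
Proof.
have [<- | pq] := pselect (p = q).
  by rewrite ger0_norm ?psd_diag_ge0.
have := psd_pair _ _ pq; rewrite normc_def.
case: (rho p p) => a1 a2; case: (rho p q) => r1 r2;
  case: (rho q p) => s1 s2; case: (rho q q) => b1 b2 => Q.
(* The vectors (1,0), (0,1), (1,1) and (1,i) make the 2x2 block Hermitian with a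
   nonnegative diagonal; (b, -conj r) then gives b (a b - |r|^2) >= 0, and
   (N, -(a+1) conj r) forces N = |r|^2 = 0 when b = 0. *)
have h1 := Q 1 0; have h2 := Q 0 1; have h3 := Q 1 1; have h4 := Q 1 'i%C.
move: h1 h2 h3 h4; rewrite !lecE /= => /andP[/eqP e1 i1] /andP[/eqP e2 i2]
  /andP[/eqP e3 i3] /andP[/eqP e4 i4].
have [a20 b20 s2E s1E] : [/\ a2 = 0, b2 = 0, s2 = - r2 & s1 = r1] by split; lra.
subst a2 b2 s2 s1; rewrite !(mulr0, mul0r, addr0, subr0) eqxx /= -expr2.
rewrite sqr_sqrtr ?addr_ge0 ?sqr_ge0 //; set N := r1 ^+ 2 + r2 ^+ 2.
have N0 : 0 <= N by rewrite addr_ge0 ?sqr_ge0.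
have h5 := Q b1%:C%C (- (r1 -i* r2))%C.
have h6 := Q N%:C%C (- (a1 + 1)%:C * (r1 -i* r2))%C.
move: h5 h6; rewrite !lecE /= => /andP[_ i5] /andP[_ i6].
have j5 : 0 <= b1 * (a1 * b1 - N) by rewrite /N; lra.
have j6 : 0 <= - (N ^+ 2 * (a1 + 2)) + (a1 + 1) ^+ 2 * N * b1 by rewrite /N in i6 *; lra.
have [b1p | b10] : 0 < b1 \/ b1 = 0 by lra.
  by move: j5; rewrite pmulr_rge0 // subr_ge0 mulrC.
subst b1; rewrite mulr0; nra.
Qed.

Lemma psd_norm_le p q : `|rho p q| <= (rho p p + rho q q) / 2.
Proof. by apply: AGM2_le; rewrite ?psd_diag_ge0 ?psd_normX_le. Qed.

End PSD.

Lemma CauchySchwarz_sum_norm (T : Type) (s : seq T) (a b : T -> C) :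
  (\sum_(i <- s) `|a i| * `|b i|) ^+ 2 <=
  (\sum_(i <- s) `|a i| ^+ 2) * (\sum_(i <- s) `|b i| ^+ 2).
Proof.
pose re (z : C) := complex.Re `|z|.
have normE z : `|z| = (re z)%:C%C by apply: ge0_Re_real.
under eq_bigr do rewrite !normE -rmorphM.
under [in X in _ <= X * _]eq_bigr do rewrite normE -rmorphXn.
under [in X in _ <= _ * X]eq_bigr do rewrite normE -rmorphXn.
by rewrite -!rmorph_sum -!rmorphXn -rmorphM lecR CauchySchwarz_sum.
Qed.

Lemma normM_le_mean (a b : C) : `|a * b| <= (`|a| ^+ 2 + `|b| ^+ 2) / 2.
Proof. by rewrite normrM; apply: AGM2_le; rewrite ?exprMn ?mulr_ge0 ?exprn_ge0. Qed.

Section Operators.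
Variables (T : Type) (rho : kernel R T) (t : C).
Hypotheses (rho_psd : psd rho) (rho_tr : hasSum (fun x => rho x x) t).

Variables (psi : T -> C) (n : C).
Hypothesis psi_l2 : hasSum (fun y => `|psi y| ^+ 2) n.

Lemma psd_apply_exists : exists phi, applies rho psi phi.
Proof.
suff /choice[phi Hphi] x : exists s, hasSum (fun y => rho x y * psi y) s by exists phi.
apply: (summable_dominated (g := fun y => 2^-1 * (rho x x * rho y y + `|psi y| ^+ 2))).
  move=> y; apply: le_trans (normM_le_mean _ _) _.
  by rewrite mulrC ler_pM2l ?invr_gt0 ?ltr0n // lerD2r psd_normX_le.
exact: hasSumZ (hasSumD (hasSumZ _ rho_tr) psi_l2).
Qed.

Lemma psd_apply_normX_le phi x :
  applies rho psi phi -> `|phi x| ^+ 2 <= rho x x * t * n.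
Proof.
move=> app; set B := rho x x * t * n.
have t0 : 0 <= t by apply: hasSum_ge0 rho_tr => y; apply: psd_diag_ge0.
have n0 : 0 <= n by apply: hasSum_ge0 psi_l2 => y; apply: exprn_ge0.
have B0 : 0 <= B by rewrite !mulr_ge0 ?psd_diag_ge0.
suff le : `|phi x| <= sqrtC B.
  by rewrite -[B]sqrtCK ler_pXn2r ?nnegrE ?sqrtC_ge0.
apply/ler_addgt0Pr => e e0; have [G0 HG0] := app x e e0.
pose G := lunion G0 [::]; have NG : List.NoDup G := lunion_NoDup _ _.
have near := HG0 G NG (@incl_lunionl _ G0 [::]).
have partial : `|\sum_(y <- G) rho x y * psi y| <= sqrtC B.
  apply: le_trans (ler_norm_sum _ _ _) _; under eq_bigr do rewrite normrM.
  rewrite -(@ler_pXn2r _ 2) ?nnegrE ?sqrtC_ge0 ?sumr_ge0 ?sqrtCK //; last first.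
    by move=> y _; rewrite mulr_ge0.
  apply: le_trans (CauchySchwarz_sum_norm _ _ _) _.
  rewrite /B; apply: ler_pM.
  - by rewrite sumr_ge0 // => y _; apply: exprn_ge0.
  - by rewrite sumr_ge0 // => y _; apply: exprn_ge0.
  - apply: le_trans (_ : _ <= \sum_(y <- G) rho x x * rho y y) _.
      by apply: ler_sum => y _; apply: psd_normX_le.
    rewrite -mulr_sumr ler_wpM2l ?psd_diag_ge0 //.
    by apply: ler_sum_hasSum rho_tr NG => y; apply: psd_diag_ge0.
  - by apply: ler_sum_hasSum psi_l2 NG => y; apply: exprn_ge0.
rewrite -[phi x](subrK (\sum_(y <- G) rho x y * psi y)).
apply: le_trans (ler_normD _ _) _; rewrite addrC lerD // distrC ltW //.
Qed.

Lemma psd_apply_l2 phi : applies rho psi phi ->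
  exists2 s, hasSum (fun x => `|phi x| ^+ 2) s & s <= t ^+ 2 * n.
Proof.
move=> app.
have n0 : 0 <= n by apply: hasSum_ge0 psi_l2 => y; apply: exprn_ge0.
have partial F : List.NoDup F -> List.Forall (fun _ => True) F ->
    \sum_(x <- F) `|phi x| ^+ 2 <= t ^+ 2 * n.
  move=> NF _; apply: le_trans (ler_sum _ (fun x _ => psd_apply_normX_le x app)) _.
  rewrite -!mulr_suml expr2 ler_wpM2r // ler_wpM2r ?ler_sum_hasSum //.
    by apply: hasSum_ge0 rho_tr => y; apply: psd_diag_ge0.
  by move=> y; apply: psd_diag_ge0.
have [s /[dup] /(hasSum_on_ub partial) le fs] := summable_on_ge0_bounded
  (fun x _ => exprn_ge0 2 (normr_ge0 (phi x))) partial.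
by exists s => //; apply/hasSum_onT.
Qed.

End Operators.

Lemma hasSum0 (T : Type) : hasSum (fun _ : T => 0 : C) 0.
Proof. exact/hasSum_onT/hasSum_on0. Qed.

Lemma supp_sub_range (T : Type) (rho : kernel R T) (A : predicate R T) phi :
  supp_sub rho A -> is_l2 phi -> range rho phi -> A phi.
Proof.
move=> supp l2 rphi; apply: supp; split=> // e e0; exists phi; split=> //.
exists 0; split; last by rewrite exprn_gt0.
by under eq_fun do rewrite subrr normr0 expr0n; apply: hasSum0.
Qed.

Lemma supp_sub_of_range (T : Type) (rho : kernel R T) (A : predicate R T) :
  (forall phi, range rho phi -> A phi) -> supp_sub rho A.
Proof.
move=> rA phi [l2 approx]; apply: pred_closed; split=> // e /approx[g [rg dg]].
by exists g; split=> //; apply: rA.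
Qed.

Lemma hasSum_fibers_diag_dominated (J I P : Type) (pi : J -> I) (a : J -> kernel R P)
    (b : I -> kernel R P) (c : kernel R P) :
  (forall j p, 0 <= a j p p) -> (forall j p q, `|a j p q| <= (a j p p + a j q q) / 2) ->
  (forall i p q, hasSum_on (fun j => pi j = i) (fun j => a j p q) (b i p q)) ->
  (forall p q, hasSum (fun i => b i p q) (c p q)) ->
  forall p q, hasSum (fun j => a j p q) (c p q).
Proof.
move=> a_ge0 a_le fib bc p q.
have diag r : hasSum (fun j => a j r r) (c r r).
  by apply: hasSum_fibers_ge0 (bc r r) => [i | j]; [apply: fib | apply: a_ge0].
have [s apq] : exists s, hasSum (fun j => a j p q) s.
  apply: (summable_dominated (g := fun j => 2^-1 * (a j p p + a j q q))).
    by move=> j; rewrite mulrC a_le.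
  exact: hasSumZ (hasSumD (diag p) (diag q)).
by rewrite -(hasSum_unique (hasSum_fibers (fun i => fib i p q) apq) (bc p q)).
Qed.

Section SumOfKernels.
Variables (I K : Type) (rho : I -> kernel R K) (sigma : kernel R K).
Hypotheses (rho_psd : forall i, psd (rho i))
  (rho_sum : forall p q, hasSum (fun i => rho i p q) (sigma p q)).

Lemma hasSum_quad (F : seq K) (c : K -> C) :
  hasSum (fun i => \sum_(x <- F) \sum_(y <- F) (c x)^* * rho i x y * c y)
         (\sum_(x <- F) \sum_(y <- F) (c x)^* * sigma x y * c y).
Proof.
apply: hasSum_sum => x; apply: hasSum_sum => y.
rewrite mulrAC; under eq_fun do rewrite mulrAC.
exact: hasSumZ.
Qed.

Lemma psd_sum : psd sigma.
Proof. by move=> F c; apply: hasSum_ge0 (hasSum_quad F c) => i; apply: rho_psd. Qed.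

Lemma hasSum_trace_sum (tr : I -> C) t :
  (forall i, hasSum (fun p => rho i p p) (tr i)) -> hasSum (fun p => sigma p p) t ->
  hasSum tr t.
Proof.
move=> rho_tr sigma_tr; pose G (k : K * I) := rho k.2 k.1 k.1.
have G_ge0 k : 0 <= G k by apply: psd_diag_ge0.
have /hasSum_swap Gt : hasSum G t.
  by apply: hasSum_fibers_ge0 sigma_tr => // p; apply: hasSum_pair_fiber (rho_sum p p).
by apply: hasSum_fibers Gt => i; apply: hasSum_pair_fiber (rho_tr i).
Qed.

Lemma psd_sub_partial_sum (F : seq I) : List.NoDup F ->
  psd (fun p q => sigma p q - \sum_(i <- F) rho i p q).
Proof.
move=> NF G c; have quad_ge0 i : 0 <= \sum_(x <- G) \sum_(y <- G) (c x)^* * rho i x y * c y.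
  exact: rho_psd.
have := ler_sum_hasSum quad_ge0 (hasSum_quad G c) NF; rewrite -subr_ge0.
congr (_ <= _); symmetry.
under eq_bigr do under eq_bigr do rewrite mulrBr mulrBl mulr_sumr mulr_suml.
under eq_bigr do rewrite sumrB; rewrite sumrB; congr (_ - _).
by under eq_bigr do rewrite exchange_big; rewrite exchange_big.
Qed.

Lemma supp_sub_sum (A : predicate R K) (tr : I -> C) t :
  (forall i, hasSum (fun p => rho i p p) (tr i)) -> hasSum (fun p => sigma p p) t ->
  (forall i, supp_sub (rho i) A) -> supp_sub sigma A.
Proof.
move=> rho_tr sigma_tr supp; apply: supp_sub_of_range => phi [psi [[n psi_l2] app]].
have n0 : 0 <= n by apply: hasSum_ge0 psi_l2 => y; apply: exprn_ge0.
have [phis app_i] := choice (fun i => psd_apply_exists (rho_psd i) (rho_tr i) psi_l2).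
have A_partial (F : seq I) : A (fun p => \sum_(i <- F) phis i p).
  elim: F => [|i F IH]; first by under eq_fun do rewrite big_nil; apply: pred_0.
  under eq_fun do rewrite big_cons; apply: pred_add IH.
  have [s fs _] := psd_apply_l2 (rho_psd i) (rho_tr i) psi_l2 (app_i i).
  by apply: supp_sub_range (supp i) _ _; [exists s | exists psi; split => //; exists n].
apply: pred_closed; split.
  by have [s fs _] := psd_apply_l2 psd_sum sigma_tr psi_l2 app; exists s.
move=> e e0; have d0 : 0 < e / (n + 1) by rewrite divr_gt0 ?ltr_wpDl.
have [F0 HF0] := hasSum_trace_sum rho_tr sigma_tr d0.
pose F := lunion F0 [::]; have NF : List.NoDup F := lunion_NoDup _ _.
have small := HF0 F NF (@incl_lunionl _ F0 [::]).
pose TF p q := sigma p q - \sum_(i <- F) rho i p q.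
have TF_psd : psd TF := psd_sub_partial_sum NF.
have TF_tr : hasSum (fun p => TF p p) (t - \sum_(i <- F) tr i).
  exact: hasSumB sigma_tr (hasSum_sum _ rho_tr).
have TF_app : applies TF psi (fun p => phi p - \sum_(i <- F) phis i p).
  move=> x; under eq_fun do rewrite /TF mulrBl mulr_suml.
  exact: hasSumB (app x) (hasSum_sum _ (fun i => app_i i x)).
have [s fs sle] := psd_apply_l2 TF_psd TF_tr psi_l2 TF_app.
exists (fun p => \sum_(i <- F) phis i p); split=> //; exists s; split=> //.
apply: le_lt_trans sle (sqr_mul_lt_of_le_div n0 e0 _ _).
  by apply: hasSum_ge0 TF_tr => p; apply: psd_diag_ge0.
by rewrite -(ger0_norm (hasSum_ge0 (psd_diag_ge0 TF_psd) TF_tr)) distrC ltW.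
Qed.

End SumOfKernels.

Lemma tensor_norm_le (V W : Type) (r : kernel R V) (r' : kernel R W) p q :
  psd r -> psd r' ->
  `|tensor r r' p q| <= (tensor r r' p p + tensor r r' q q) / 2.
Proof.
move=> r_psd r'_psd; rewrite /tensor.
apply: AGM2_le; [exact: normr_ge0 | by rewrite mulr_ge0 ?psd_diag_ge0 ..|].
rewrite normrM exprMn [in X in _ <= X]mulrACA.
by apply: ler_pM; rewrite ?exprn_ge0 ?psd_normX_le.
Qed.

Lemma separable_sum (I V W : Type) (rho : I -> kernel R (V * W))
    (sigma : kernel R (V * W)) :
  (forall i, separable (rho i)) -> (forall p q, hasSum (fun i => rho i p q) (sigma p q)) ->
  mixed sigma -> separable sigma.
Proof.
move=> sep rho_sum sigma_mixed.
have decomp i : exists d : {J : Type & ((J -> kernel R V) * (J -> kernel R W))%type},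
    (forall j, mixed ((projT2 d).1 j) /\ mixed ((projT2 d).2 j)) /\
    is_sum (fun j => tensor ((projT2 d).1 j) ((projT2 d).2 j)) (rho i).
  by have [J [r [r' H]]] := sep i; exists (existT _ J (r, r')).
have [d Hd] := choice decomp.
pose r (k : {i & projT1 (d i)}) := (projT2 (d (projT1 k))).1 (projT2 k).
pose r' (k : {i & projT1 (d i)}) := (projT2 (d (projT1 k))).2 (projT2 k).
have rr'_psd k : psd (r k) /\ psd (r' k).
  by have [[r_psd _] [r'_psd _]] := proj1 (Hd (projT1 k)) (projT2 k); split.
exists {i & projT1 (d i)}, r, r'; split; first by case=> i j; apply: (proj1 (Hd i)).
split=> //; apply: (hasSum_fibers_diag_dominated (pi := @projT1 _ _) (b := rho)) => //.
- by move=> k p; have [? ?] := rr'_psd k; rewrite mulr_ge0 ?psd_diag_ge0.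
- by move=> k p q; have [? ?] := rr'_psd k; apply: tensor_norm_le.
move=> i p q; apply: (hasSum_on_inj (phi := existT _ i)).
- by move=> j j' eq_ij; apply: Eqdep.EqdepTheory.inj_pair2 eq_ij.
- by case=> i' j; split=> [/= <- | [j' <-]] //; exists j.
- exact: (proj2 (proj2 (Hd i)) p q).
Qed.

Section PartialTrace.
Variables (X E U : Type).
Local Notation K := ((X * E) * U)%type.
Local Notation emb x w := (((x, w.1), w.2) : K).

Definition is_ptrace (rho0 : kernel R K) (rho : kernel R X) : Prop :=
  forall x x', hasSum (fun w : E * U => rho0 (emb x w) (emb x' w)) (rho x x').

Lemma ptrace_diag_le (rho0 : kernel R K) rho p :
  psd rho0 -> is_ptrace rho0 rho -> rho0 p p <= rho p.1.1 p.1.1.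
Proof.
case: p => [[x e] u] rho0_psd ptr.
apply: le_trans (ler_sum_hasSum (F := [:: (e, u)]) _ (ptr x x) _).
- by rewrite big_seq1.
- by move=> w; apply: psd_diag_ge0.
- by repeat constructor.
Qed.

Lemma ptrace_trace (rho0 : kernel R K) rho t :
  psd rho0 -> is_ptrace rho0 rho -> hasSum (fun x => rho x x) t ->
  hasSum (fun p => rho0 p p) t.
Proof.
move=> rho0_psd ptr rho_tr; apply: (hasSum_fibers_ge0 (pi := fun p : K => p.1.1)) rho_tr.
  move=> x; apply: (hasSum_on_inj (phi := fun w : E * U => emb x w)) (ptr x x).
    by move=> [e u] [e' u'] [-> ->].
  by move=> [[x' e] u]; split=> [/= -> | [w <-]] //; exists (e, u).
exact: psd_diag_ge0.
Qed.

Variables (I : Type) (rho0 : I -> kernel R K) (rho : I -> kernel R X).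
Hypotheses (rho0_psd : forall i, psd (rho0 i)) (ptr : forall i, is_ptrace (rho0 i) (rho i)).

Lemma ptrace_sum_exists (sigma : kernel R X) :
  (forall x, hasSum (fun i => rho i x x) (sigma x x)) ->
  exists rho0s : kernel R K, forall p q, hasSum (fun i => rho0 i p q) (rho0s p q).
Proof.
move=> rho_sum.
suff /choice[f Hf] (pq : K * K) : exists s, hasSum (fun i => rho0 i pq.1 pq.2) s.
  by exists (fun p q => f (p, q)) => p q; apply: Hf (p, q).
case: pq => p q /=.
apply: (summable_dominated (g := fun i => 2^-1 * (rho i p.1.1 p.1.1 + rho i q.1.1 q.1.1))).
  move=> i; apply: le_trans (psd_norm_le (rho0_psd i) p q) _.
  by rewrite mulrC ler_pM2l ?invr_gt0 ?ltr0n // lerD // ptrace_diag_le.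
exact: hasSumZ (hasSumD (rho_sum _) (rho_sum _)).
Qed.

Lemma ptrace_sum (sigma : kernel R X) (rho0s : kernel R K) :
  (forall x x', hasSum (fun i => rho i x x') (sigma x x')) ->
  (forall p q, hasSum (fun i => rho0 i p q) (rho0s p q)) ->
  is_ptrace rho0s sigma.
Proof.
move=> rho_sum rho0_sum x x'.
pose a (k : I * (E * U)) y y' := rho0 k.1 (emb y k.2) (emb y' k.2).
have a_sum : hasSum (fun k => a k x x') (sigma x x').
  apply: (hasSum_fibers_diag_dominated (pi := fst) (b := rho)) rho_sum x x'
    => [k y | k y y' | i y y']; rewrite /a.
  - exact: psd_diag_ge0.
  - exact: psd_norm_le.
  - exact: hasSum_pair_fiber (ptr i y y').
apply: hasSum_fibers (hasSum_swap a_sum) => w.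
by apply: hasSum_pair_fiber; rewrite /a /=; apply: rho0_sum.
Qed.

End PartialTrace.

End Summation.

Theorem lemma13 (R : realType) (X E U : Type) (A : predicate R ((X * E) * U))
  (I : Type) (rhos : I -> kernel R X) (sigma : kernel R X) :
  (forall i, mixed (rhos i)) ->
  (forall i, sat (rhos i) A) ->
  is_sum rhos sigma ->
  sat sigma A.
Proof.
move=> _ rhos_sat [[_ [t sigma_tr]] sigma_sum].
have [rho0 rho0P] := choice rhos_sat.
have psd0 i : psd (rho0 i) by case: (rho0P i) => -[].
have ptr0 i : is_ptrace (rho0 i) (rhos i) by case: (rho0P i) => _ [_ []].
have [rho0s sum0] := ptrace_sum_exists psd0 ptr0 (fun x => sigma_sum x x).
have ptrs := ptrace_sum psd0 ptr0 sigma_sum sum0.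
have psds := psd_sum psd0 sum0.
have trs := ptrace_trace psds ptrs sigma_tr.
have mixed0 : mixed rho0s by split=> //; exists t.
exists rho0s; split=> //; split; last split=> //.
  by apply: separable_sum sum0 mixed0 => i; case: (rho0P i) => _ [].
have [tr tr_i] := choice (fun i => (proj1 (rho0P i)).2).
by apply: (supp_sub_sum psd0 sum0 tr_i trs) => i; case: (rho0P i) => _ [_ []].
Qed.
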